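(* Let $\mathfrak{g}$ be a nice nilpotent Lie algebra of dimension $n$ with nice diagram $\Delta$, $m$ arrows, and structure constants $c\in\mathbb{R}^m$, let $\sigma$ be a diagram involution, and let $k\in\mathbb{R}$ and $\delta\in(\mathbb{Z}_2)^n$ be $\sigma$-invariant. Then $\mathfrak{g}$ has a $\sigma$-diagonal metric $g=\sum_i g_ie^i\otimes e^{\sigma_i}$ with $\operatorname{logsign} g=\delta$ and Ricci operator $\operatorname{Ric}=\frac12k\,\mathrm{id}$ if and only if there exists a $\sigma$-invariant $X\in\mathbb{R}^m$ such that: (K) $M_\Delta^{T}X=[k]$; (H) all entries of $X$ are nonzero; (L$_\sigma$) $\operatorname{logsign} X+\operatorname{logsign} c+\operatorname{logsign}\tilde c=M_{\Delta,2}\,\delta$; (P$_\sigma$) for a basis $\alpha_1,\dots,\alpha_r$ of the $\sigma$-invariant subspace $(\ker M_\Delta^T)^\sigma$, one has $\lvert X\rvert^{\alpha_i}=\lvert c\rvert^{2\alpha_i}$, $i=1,\dots,r$.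
   Context: A nice basis of a real Lie algebra is a basis $\{e_1,\dots,e_n\}$ with dual basis $\{e^i\}$ such that each $[e_i,e_j]$ is a multiple of some $e_h$ and each $e_i\lrcorner\,de^j$ is a multiple of some $e^h$ ($d$ the Chevalley–Eilenberg differential); a nice Lie algebra is a Lie algebra with a fixed nice basis. The nice diagram $\Delta$ has nodes $1,\dots,n$ and an arrow $i\xrightarrow{j}k$ whenever $e_k$ is a nonzero multiple of $[e_i,e_j]$; $\mathcal I_\Delta$ is the set of triples $\{\{i,j\},k\}$ with $i\xrightarrow{j}k$ an arrow, $m=\lvert\mathcal I_\Delta\rvert$. The structure constants $c\in\mathbb{R}^m$ are defined by $de^k=\sum c_{ijk}e^i\wedge e^j$ ($i<j$, over $\mathcal I_\Delta$). The root matrix $M_\Delta$ is the $m\times n$ matrix whose row indexed by $\{\{i,j\},k\}$ has $1$ in column $k$, $-1$ in columns $i,j$, $0$ elsewhere; $M_{\Delta,2}$ is its reduction mod $2$. A diagram involution is a permutation $\sigma$ of $\{1,\dots,n\}$ of order two which is an automorphism of $\Delta$, i.e. $i\xrightarrow{j}k$ is an arrow iff $\sigma_i\xrightarrow{\sigma_j}\sigma_k$ is. It acts on $\mathbb{R}^n$ by permuting coordinates and on $\mathbb{R}^m$ by permuting coordinates via $\{\{i,j\},k\}\mapsto\{\{\sigma_i,\sigma_j\},\sigma_k\}$. The vector $\tilde c\in\mathbb{R}^m$ is the coordinate vector, in the basis $e^l\wedge e^h\otimes e_p$ ($l<h$), of $\sum c_{ijk}\,e^{\sigma_i}\wedge e^{\sigma_j}\otimes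 e_{\sigma_k}$. A $\sigma$-diagonal metric is a nondegenerate scalar product $\sum_i g_ie^i\otimes e^{\sigma_i}$ with $g=(g_1,\dots,g_n)\in(\mathbb{R}\setminus\{0\})^n$ $\sigma$-invariant. $\operatorname{logsign}x=0$ for $x>0$ and $1$ for $x<0$, applied componentwise; $[k]\in\mathbb{R}^n$ has all entries $k$; $\lvert X\rvert^\alpha=\prod_j\lvert x_j\rvert^{\alpha_j}$; $\operatorname{Ric}$ is the Ricci operator of the left-invariant pseudoriemannian metric. *)

From HB Require Import structures.
From mathcomp Require Import all_boot all_order all_algebra all_fingroup.
From mathcomp Require Import all_classical all_reals all_analysis.
Set Implicit Arguments. Unset Strict Implicit. Unset Printing Implicit Defensive.
Import Order.TTheory GRing.Theory Num.Theory.
Local Open Scope ring_scope.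

(* A real Lie algebra of dimension n with fixed basis e_1..e_n is encoded by
   its bracket constants: [e_i, e_j] = \sum_k C i j k e_k. *)

Definition lie_algebra (R : realType) n (C : 'I_n -> 'I_n -> 'I_n -> R) : Prop :=
  (forall i j k, C i j k = - C j i k) /\
  (forall i j h k, \sum_(l < n) (C i j l * C l h k + C j h l * C l i k
                                  + C h i l * C l j k) = 0).

(* ad_{e_i} in row-vector convention: y ↦ [e_i, y] is  y *m ad C i. *)
Definition ad (R : realType) n (C : 'I_n -> 'I_n -> 'I_n -> R) (i : 'I_n) : 'M[R]_n :=
  \matrix_(j, k) C i j k.

(* nilpotent: the lower central series vanishes, i.e. all iterated brackets
   [x_1,[x_2,...,[x_N,y]]] vanish (multilinearity: enough on basis vectors). *)
Definition nilpotent_lie (R : realType) n (C : 'I_n -> 'I_n -> 'I_n -> R) : Prop :=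
  exists N : nat, forall s : N.-tuple 'I_n,
    foldr (fun i A => ad C i *m A) (1%:M : 'M[R]_n) s = 0.

(* nice basis: each [e_i,e_j] is a multiple of some e_h, and each
   e_i -| de^j (whose e^h-coefficient is de^j(e_i,e_h) = - C i h j)
   is a multiple of some e^h. *)
Definition nice_basis (R : realType) n (C : 'I_n -> 'I_n -> 'I_n -> R) : Prop :=
  (forall i j k k', C i j k != 0 -> C i j k' != 0 -> k = k') /\
  (forall i j h h', C i h j != 0 -> C i h' j != 0 -> h = h').

Definition triple n := ('I_n * 'I_n * 'I_n)%type.

(* {{i,j},k} in I_Delta, represented as (i,j,k) with i < j *)
Definition is_arrow (R : realType) n (C : 'I_n -> 'I_n -> 'I_n -> R) (t : triple n) : bool :=
  ((t.1.1 : nat) < t.1.2)%N && (C t.1.1 t.1.2 t.2 != 0).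

Definition arrows (R : realType) n (C : 'I_n -> 'I_n -> 'I_n -> R) :=
  {t : triple n | is_arrow C t}.

(* coefficient of e^i /\ e^j (i<j) in de^k, with de^k(x,y) = - e^k([x,y]) *)
Definition sc (R : realType) n (C : 'I_n -> 'I_n -> 'I_n -> R) (i j k : 'I_n) : R :=
  - C i j k.

Definition cvec (R : realType) n (C : 'I_n -> 'I_n -> 'I_n -> R) (a : arrows C) : R :=
  sc C (val a).1.1 (val a).1.2 (val a).2.

(* c~ : coordinates of \sum c_ijk e^{s i} /\ e^{s j} (x) e_{s k} *)
Definition ctilde (R : realType) n (C : 'I_n -> 'I_n -> 'I_n -> R)
    (s : {perm 'I_n}) (a : arrows C) : R :=
  let: (l, h, p) := val a in
  if ((s l : nat) < s h)%N then sc C (s l) (s h) (s p)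
  else - sc C (s h) (s l) (s p).

Definition Mroot (R : realType) n (C : 'I_n -> 'I_n -> 'I_n -> R)
    (a : arrows C) (l : 'I_n) : int :=
  let: (i, j, k) := val a in
  (l == k)%:Z - (l == i)%:Z - (l == j)%:Z.

(* M_{Delta,2} delta, computed in Z_2 = (bool, xor, and) *)
Definition M2_mul (R : realType) n (C : 'I_n -> 'I_n -> 'I_n -> R)
    (delta : 'I_n -> bool) (a : arrows C) : bool :=
  \big[addb/false]_(l < n) (odd (absz (Mroot a l)) && delta l).

Definition logsign (R : realType) (x : R) : bool := x < 0.

Definition diagram_involution (R : realType) n (C : 'I_n -> 'I_n -> 'I_n -> R)
    (s : {perm 'I_n}) : Prop :=
  #[s]%g = 2%N /\
  (forall i j k, (C i j k != 0) = (C (s i) (s j) (s k) != 0)).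

Definition tri_img n (s : {perm 'I_n}) (t : triple n) : triple n :=
  let: (i, j, k) := t in
  if ((s i : nat) < s j)%N then (s i, s j, s k) else (s j, s i, s k).

Definition inv_arr (R : realType) n (C : 'I_n -> 'I_n -> 'I_n -> R)
    (s : {perm 'I_n}) (X : arrows C -> R) : Prop :=
  forall a b : arrows C, val b = tri_img s (val a) -> X b = X a.

Definition kerMT_inv (R : realType) n (C : 'I_n -> 'I_n -> 'I_n -> R)
    (s : {perm 'I_n}) (al : arrows C -> R) : Prop :=
  (forall l : 'I_n, \sum_(a : arrows C) (Mroot a l)%:~R * al a = 0) /\ inv_arr s al.

Definition is_basis (R : realType) (A : finType) (P : (A -> R) -> Prop) r
    (alpha : 'I_r -> A -> R) : Prop :=
  (forall i, P (alpha i)) /\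
  (forall lam : 'I_r -> R, (forall a, \sum_(i < r) lam i * alpha i a = 0) ->
      forall i, lam i = 0) /\
  (forall v, P v -> exists lam : 'I_r -> R,
      forall a, v a = \sum_(i < r) lam i * alpha i a).

Definition monopow (R : realType) (A : finType) (X al : A -> R) : R :=
  \prod_(a : A) powR `|X a| (al a).

Definition metric_mx (R : realType) n (s : {perm 'I_n}) (g : 'I_n -> R) : 'M[R]_n :=
  \matrix_(i, j) (if j == s i then g i else 0).

Definition sigma_diag_metric (R : realType) n (s : {perm 'I_n}) (g : 'I_n -> R) : Prop :=
  (forall i, g i != 0) /\ (forall i, g (s i) = g i).

Definition ebas (R : realType) n (h : 'I_n) : 'rV[R]_n := delta_mx 0 h.

Definition gf (R : realType) n (G : 'M[R]_n) (u v : 'rV[R]_n) : R :=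
  (u *m G *m v^T) 0 0.

Definition br (R : realType) n (C : 'I_n -> 'I_n -> 'I_n -> R) (i j : 'I_n) : 'rV[R]_n :=
  \row_k C i j k.

Definition brv (R : realType) n (C : 'I_n -> 'I_n -> 'I_n -> R) (u v : 'rV[R]_n) : 'rV[R]_n :=
  \sum_(i < n) \sum_(j < n) (u 0 i * v 0 j) *: br C i j.

(* Levi-Civita connection on basis vectors via the Koszul formula
   2 g(nabla_X Y, Z) = g([X,Y],Z) - g([Y,Z],X) + g([Z,X],Y). *)
Definition LC (R : realType) n (C : 'I_n -> 'I_n -> 'I_n -> R) (G : 'M[R]_n)
    (i j : 'I_n) : 'rV[R]_n :=
  (2^-1 *: \row_h (gf G (br C i j) (ebas R h) - gf G (br C j h) (ebas R i)
                   + gf G (br C h i) (ebas R j))) *m invmx G.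

Definition nabla (R : realType) n (C : 'I_n -> 'I_n -> 'I_n -> R) (G : 'M[R]_n)
    (u v : 'rV[R]_n) : 'rV[R]_n :=
  \sum_(i < n) \sum_(j < n) (u 0 i * v 0 j) *: LC C G i j.

Definition curv (R : realType) n (C : 'I_n -> 'I_n -> 'I_n -> R) (G : 'M[R]_n)
    (u v w : 'rV[R]_n) : 'rV[R]_n :=
  nabla C G u (nabla C G v w) - nabla C G v (nabla C G u w) - nabla C G (brv C u v) w.

Definition ricci_form (R : realType) n (C : 'I_n -> 'I_n -> 'I_n -> R) (G : 'M[R]_n)
    (j l : 'I_n) : R :=
  \sum_(i < n) (curv C G (ebas R i) (ebas R j) (ebas R l)) 0 i.

(* Ricci operator: g(Ric Y, Z) = ric(Y, Z); row-vector convention Y |-> Y *m Ric *)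
Definition Ric_op (R : realType) n (C : 'I_n -> 'I_n -> 'I_n -> R) (G : 'M[R]_n) : 'M[R]_n :=
  (\matrix_(j, l) ricci_form C G j l) *m invmx G.

Arguments inv_arr {R n} C s X.
Arguments kerMT_inv {R n} C s al.
Arguments ctilde {R n} C s a.
Arguments M2_mul {R n} C delta a.
Arguments cvec {R n} C a.

(* For a sigma-diagonal metric g the Koszul formula gives the Christoffel
   symbols explicitly.  Nilpotency and niceness forbid 2-cycles
   [e_l, e_i] ~ e_b, [e_j, e_b] ~ e_i in the nice diagram; this kills the
   trace and Killing-form terms, and the remaining products of Christoffel
   symbols cancel in pairs (one pair by the Jacobi identity).  The Ricci
   operator comes out diagonal, with entries (M_Delta^T X)_j / 2 for the
   arrow weights X_{ijk} = c_{ijk} c~_{ijk} g_k / (g_i g_j); so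
   Ric = k/2 id iff M_Delta^T X = [k], and this X satisfies (H), (L_sigma)
   and (P_sigma).  Conversely, given such an X, (P_sigma) says that
   v = log|X| - log|c| - log|c~| is orthogonal to (ker M_Delta^T)^sigma,
   hence (symmetrizing) to ker M_Delta^T, so v = M_Delta y with y
   sigma-invariant; then g = (-1)^delta exp(y) has weights X, the signs being
   matched by (L_sigma). *)

From HB Require Import structures.
From mathcomp Require Import all_boot all_order all_algebra all_fingroup.
From mathcomp Require Import all_classical all_reals all_analysis.
From mathcomp Require Import ring lra.
Import Order.TTheory GRing.Theory Num.Theory.
Set Implicit Arguments. Unset Strict Implicit. Unset Printing Implicit Defensive.
Local Open Scope ring_scope.

Lemma order2_permK (T : finType) (s : {perm T}) : #[s]%g = 2%N -> involutive s.
Proof.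
move=> s2 i; have := expg_order s; rewrite s2 expgS expg1.
by move/(congr1 (fun p : {perm T} => p i)); rewrite permM perm1.
Qed.

Lemma logsign_eq (R : realType) (x y : R) :
  `|x| = `|y| -> logsign x = logsign y -> x = y.
Proof.
rewrite /logsign; have [x0|x0] := ltrP x 0; have [y0|y0] := ltrP y 0 => //=.
- by rewrite !ltr0_norm // => /oppr_inj.
- by rewrite !ger0_norm.
Qed.

Lemma monopow_expR (R : realType) (A : finType) (X al : A -> R) :
  (forall a, X a != 0) -> monopow X al = expR (\sum_a al a * ln `|X a|).
Proof.
move=> X0; rewrite /monopow expR_sum; apply: eq_bigr => a _.
by rewrite /powR normr_eq0 (negbTE (X0 a)).
Qed.

Lemma solvable_of_orthogonal (R : fieldType) (A I : finType) (M : A -> I -> R) (v : A -> R) :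
  (forall w : A -> R, (forall l, \sum_a M a l * w a = 0) -> \sum_a w a * v a = 0) ->
  exists y : I -> R, forall a, \sum_l M a l * y l = v a.
Proof.
move=> orth_v.
pose Mx : 'M[R]_(#|I|, #|A|) := \matrix_(l, a) M (enum_val a) (enum_val l).
pose vr : 'rV[R]_#|A| := \row_a v (enum_val a).
have /submxP [y yM] : (vr <= Mx)%MS.
  rewrite submxE; apply/eqP/rowP => c; rewrite !mxE.
  pose w a : R := cokermx Mx (enum_rank a) c.
  have w_ker l : \sum_a M a l * w a = 0.
    transitivity ((Mx *m cokermx Mx) (enum_rank l) c); last by rewrite mulmx_coker mxE.
    rewrite mxE [LHS]big_enum_val; apply: eq_bigr => a _.
    by rewrite /w enum_valK [Mx _ _]mxE enum_rankK.
  rewrite -[RHS](orth_v w w_ker) [RHS]big_enum_val; apply: eq_bigr => a _.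
  by rewrite /w enum_valK [vr _ _]mxE mulrC.
exists (fun l => y 0 (enum_rank l)) => a.
have := congr1 (fun B : 'rV[R]_#|A| => B 0 (enum_rank a)) yM; rewrite !mxE enum_rankK => ->.
rewrite big_enum_val; apply: eq_bigr => l _; by rewrite mxE enum_rankK enum_valK mulrC.
Qed.

Lemma basis_orthogonal (R : realType) (A : finType) (P : (A -> R) -> Prop) r
    (alpha : 'I_r -> A -> R) (v : A -> R) :
  is_basis P alpha -> (forall i, \sum_a alpha i a * v a = 0) ->
  forall w, P w -> \sum_a w a * v a = 0.
Proof.
move=> [_ [_ span]] alpha_v w /span [lam w_lam].
under eq_bigr => a _ do rewrite w_lam mulr_suml.
rewrite exchange_big big1 // => i _.
transitivity (lam i * \sum_a alpha i a * v a); last by rewrite alpha_v mulr0.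
by rewrite mulr_sumr; apply: eq_bigr => a _; ring.
Qed.

Definition signed_exp (R : realType) n (delta : 'I_n -> bool) (y : 'I_n -> R) l :=
  (-1) ^+ delta l * expR (y l).

Section SignedExp.
Variables (R : realType) (n : nat) (delta : 'I_n -> bool) (y : 'I_n -> R).

Lemma signed_exp_neq0 l : signed_exp delta y l != 0.
Proof. by rewrite mulf_neq0 ?signr_eq0 ?gt_eqF ?expR_gt0. Qed.

Lemma logsign_signed_exp l : logsign (signed_exp delta y l) = delta l.
Proof. by rewrite /logsign mulr_sign_lt0 gt_eqF ?expR_gt0 // ltNge ltW ?expR_gt0 ?addbF. Qed.

Lemma ln_norm_signed_exp l : ln `|signed_exp delta y l| = y l.
Proof. by rewrite normrMsign ger0_norm ?expRK // ltW ?expR_gt0. Qed.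

End SignedExp.

Section NiceNilpotent.
Variables (R : realType) (n : nat) (C : 'I_n -> 'I_n -> 'I_n -> R).
Hypothesis nice : nice_basis C.

Lemma ebas_mul_ad l i b : C l i b != 0 -> ebas R i *m ad C l = C l i b *: ebas R b.
Proof.
move=> Clib; apply/rowP => k; rewrite !mxE (bigD1 i) //= big1 => [|h /negbTE hi]; last first.
  by rewrite !mxE eqxx hi mul0r.
rewrite !mxE !eqxx mul1r addr0; have [<-|bk] := eqVneq b k; first by rewrite mulr1.
rewrite mulr0; apply: contraNeq bk => Clik; apply/eqP; exact: nice.1 _ _ _ _ Clib Clik.
Qed.

Let ad_word (w : seq 'I_n) := foldr (fun i A => ad C i *m A) 1%:M w.

Lemma ad_word_cat w1 w2 : ad_word (w1 ++ w2) = ad_word w1 *m ad_word w2.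
Proof. by elim: w1 => [|x w1 IH] /=; rewrite ?mul1mx // IH mulmxA. Qed.

(* If [e_l, e_i] ~ e_b and [e_j, e_b] ~ e_i, then e_i is an eigenvector of
   ad_j ad_l with nonzero eigenvalue, against nilpotency. *)
Lemma nilpotent_nice_no_2cycle :
  nilpotent_lie C -> forall l j i b, C l i b * C j b i = 0.
Proof.
move=> [N nilN] l j i b; apply/eqP; apply: contraT => x0.
have [Clib Cjbi] : C l i b != 0 /\ C j b i != 0.
  by apply/andP; move: x0; rewrite mulf_eq0 negb_or.
pose word m := flatten (nseq m [:: l; j]).
have eigen m : ebas R i *m ad_word (word m) = (C l i b * C j b i) ^+ m *: ebas R i.
  elim: m => [|m IH]; first by rewrite mulmx1 scale1r.
  rewrite /ad_word /= -/(ad_word _) !mulmxA (ebas_mul_ad Clib) -!scalemxAl (ebas_mul_ad Cjbi).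
  by rewrite -scalemxAl -/(word m) IH !scalerA exprS mulrC.
have size_word m : size (word m) = (m + m)%N.
  by elim: m => //= m IH; rewrite IH addnS addSn.
have sizeN : size (take N (word N)) == N by rewrite size_takel // size_word leq_addr.
have := eigen N; rewrite -(cat_take_drop N (word N)) ad_word_cat.
rewrite [ad_word (take _ _)](nilN (Tuple sizeN)) mul0mx mulmx0.
move/rowP/(_ i); rewrite !mxE !eqxx mulr1 => /esym/eqP.
by rewrite expf_eq0 (negbTE x0) andbF.
Qed.

End NiceNilpotent.

Section IndexSums.
Variables (R : realType) (n : nat).
Implicit Types (s : {perm 'I_n}) (F H : 'I_n -> 'I_n -> R).

Lemma sum_perm_anti s (f : 'I_n -> R) : (forall i, f (s i) = - f i) -> \sum_i f i = 0.
Proof.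
move=> f_anti; have : \sum_i f i = - \sum_i f i.
  by rewrite [LHS](reindex_inj (@perm_inj _ s)) -sumrN; apply: eq_bigr => i _; rewrite f_anti.
lra.
Qed.

Definition dsum (F : 'I_n -> 'I_n -> R) := \sum_i \sum_b F i b.

Lemma dsumD F H : dsum (fun i b => F i b + H i b) = dsum F + dsum H.
Proof. by rewrite /dsum -big_split; apply: eq_bigr => i _; rewrite big_split. Qed.

Lemma dsumN F : dsum (fun i b => - F i b) = - dsum F.
Proof. by rewrite /dsum -sumrN; apply: eq_bigr => i _; rewrite sumrN. Qed.

Lemma dsumMl c F : dsum (fun i b => c * F i b) = c * dsum F.
Proof. by rewrite /dsum mulr_sumr; apply: eq_bigr => i _; rewrite mulr_sumr. Qed.

Lemma eq_dsum F H : (forall i b, F i b = H i b) -> dsum F = dsum H.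
Proof. by move=> FH; apply: eq_bigr => i _; apply: eq_bigr => b _. Qed.

Lemma dsum_swap F : dsum F = dsum (fun i b => F b i).
Proof. exact: exchange_big. Qed.

Lemma dsum_perm s F : dsum F = dsum (fun i b => F (s i) (s b)).
Proof.
rewrite /dsum (reindex_inj (@perm_inj _ s)); apply: eq_bigr => i _.
exact: (reindex_inj (@perm_inj _ s)).
Qed.

Lemma dsum_lt_sym F : (forall i j, F i j = F j i) -> (forall i, F i i = 0) ->
  dsum (fun i j => if (i < j)%N then F i j else 0) = 2^-1 * dsum F.
Proof.
move=> F_sym F_diag.
have split_lt_gt : dsum F = dsum (fun i j => if (i < j)%N then F i j else 0)
    + dsum (fun i j => if (j < i)%N then F i j else 0).
  rewrite -dsumD; apply: eq_dsum => i j.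
  by case: ltngtP => [||/val_inj->]; rewrite ?addr0 ?add0r ?F_diag ?addr0.
rewrite split_lt_gt [X in _ + X]dsum_swap.
rewrite [X in _ + X](@eq_dsum _ (fun i j => if (i < j)%N then F i j else 0)) => [|i j].
  by field.
by rewrite F_sym.
Qed.

Lemma sum_natr_eq (F : 'I_n -> R) j : \sum_k (k == j)%:R * F k = F j.
Proof.
by rewrite (bigD1 j) //= eqxx mul1r big1 ?addr0 // => k /negbTE ->; rewrite mul0r.
Qed.

End IndexSums.

Section RicciOperator.
Variables (R : realType) (n : nat) (C : 'I_n -> 'I_n -> 'I_n -> R) (s : {perm 'I_n}).
Hypothesis C_anti : forall i j k, C i j k = - C j i k.
Hypothesis C_jacobi : forall i j h k,
  \sum_l (C i j l * C l h k + C j h l * C l i k + C h i l * C l j k) = 0.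
Hypothesis no_2cycle : forall l j i b, C l i b * C j b i = 0.

Hypothesis nice : nice_basis C.
Hypothesis C_perm : forall i j k, (C i j k != 0) = (C (s i) (s j) (s k) != 0).

Hypothesis sK : involutive s.
Variable g : 'I_n -> R.
Hypothesis g_neq0 : forall i, g i != 0.
Hypothesis g_s : forall i, g (s i) = g i.

Local Notation G := (metric_mx s g).

Lemma sum_if_perm (V : nmodType) q (F : 'I_n -> V) :
  \sum_h (if q == s h then F h else 0) = F (s q).
Proof.
rewrite (bigD1 (s q)) //= sK eqxx big1 ?addr0 // => h hq.
by case: eqP => // qh; rewrite qh sK eqxx in hq.
Qed.

Lemma mulmx_metricV : G *m metric_mx s (fun i => (g i)^-1) = 1%:M.
Proof.
apply/matrixP => i j; rewrite !mxE (bigD1 (s i)) //= big1 => [|l /negbTE li]; last first.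
  by rewrite !mxE li mul0r.
rewrite !mxE eqxx sK addr0 g_s eq_sym; case: (i == j); rewrite ?mulr0 // mulfV //.
Qed.

Lemma invmx_metric : invmx G = metric_mx s (fun i => (g i)^-1).
Proof.
have [G_unit _] := mulmx1_unit mulmx_metricV.
by rewrite -[invmx G]mulmx1 -mulmx_metricV mulmxA mulVmx // mul1mx.
Qed.

Lemma gf_metric u v : gf G u v = \sum_a u 0 a * g a * v 0 (s a).
Proof.
rewrite /gf !mxE; under eq_bigr => b _ do rewrite !mxE big_distrl.
rewrite exchange_big; apply: eq_bigr => a _ /=; under eq_bigr => b _ do rewrite !mxE.
rewrite (bigD1 (s a)) //= eqxx big1 ?addr0 // => b /negbTE ->.
by rewrite mulr0 mul0r.
Qed.

Lemma ebasE (a q : 'I_n) : ebas R a 0 q = (a == q)%:R.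
Proof. by rewrite mxE eqxx eq_sym. Qed.

Lemma gf_br_ebas i j h : gf G (br C i j) (ebas R h) = C i j (s h) * g h.
Proof.
rewrite gf_metric (bigD1 (s h)) //= big1 ?addr0 => [|a ah].
  by rewrite ebasE !mxE sK eqxx mulr1 g_s.
by rewrite ebasE; case: eqP => [ha|_]; rewrite ?mulr0 //; rewrite ha sK eqxx in ah.
Qed.

(* Christoffel symbols, nabla_{e_i} e_j = \sum_q christoffel i j q e_q: the
   three terms are those of the Koszul formula, read off through
   g(e_a, e_b) = g_a [b = s a]. *)
Definition koszul2 i j q := - (g i / g q) * C j (s q) (s i).
Definition koszul3 i j q := g j / g q * C (s q) i (s j).
Definition christoffel i j q := 2^-1 * (C i j q + koszul2 i j q + koszul3 i j q).

Lemma LC_christoffel i j : LC C G i j = \row_q christoffel i j q.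
Proof.
apply/rowP => q; rewrite /LC invmx_metric !mxE.
under eq_bigr => h _ do rewrite !mxE (fun_if (fun t => _ * t)) mulr0.
rewrite sum_if_perm !gf_br_ebas !sK /christoffel /koszul2 /koszul3 !g_s.
by field; rewrite !g_neq0.
Qed.

Lemma sum_ebas (V : lmodType R) a (F : 'I_n -> V) : \sum_j ebas R a 0 j *: F j = F a.
Proof.
rewrite (bigD1 a) //= ebasE eqxx scale1r big1 ?addr0 // => j ja.
by rewrite ebasE eq_sym (negbTE ja) scale0r.
Qed.

Lemma nabla_ebasl a v : nabla C G (ebas R a) v = \sum_j v 0 j *: LC C G a j.
Proof.
rewrite /nabla; under eq_bigr => i _ do under eq_bigr => j _ do rewrite -scalerA.
by under eq_bigr => i _ do rewrite -scaler_sumr; rewrite sum_ebas.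
Qed.

Lemma nabla_ebasr u b : nabla C G u (ebas R b) = \sum_i u 0 i *: LC C G i b.
Proof.
rewrite /nabla; apply: eq_bigr => i _.
by under eq_bigr => j _ do rewrite mulrC -scalerA; rewrite sum_ebas.
Qed.

Lemma brv_ebas i j : brv C (ebas R i) (ebas R j) = br C i j.
Proof.
rewrite /brv; under eq_bigr => a _ do under eq_bigr => b _ do rewrite mulrC -scalerA.
by under eq_bigr => a _ do rewrite sum_ebas; rewrite sum_ebas.
Qed.

Lemma ricci_christoffel j l : ricci_form C G j l =
  \sum_i (\sum_b christoffel j l b * christoffel i b i
          - \sum_b christoffel i l b * christoffel j b i
          - \sum_p C i j p * christoffel p l i).
Proof.
apply: eq_bigr => i _; have LC_row : LC C G = fun i j => \row_q christoffel i j q.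
  by apply/funext => x; apply/funext => y; rewrite LC_christoffel.
rewrite /curv brv_ebas !nabla_ebasl nabla_ebasr !sum_ebas LC_row !mxE !summxE.
by congr (_ - _ - _); apply: eq_bigr => b _; rewrite !mxE.
Qed.

Lemma C_xyy x y : C x y y = 0.
Proof. by have /eqP := no_2cycle x x y y; rewrite mulf_eq0 orbb => /eqP. Qed.

Lemma C_xyx x y : C x y x = 0.
Proof. by rewrite C_anti C_xyy oppr0. Qed.

Lemma christoffel_trace b : \sum_i christoffel i b i = 0.
Proof.
apply: (sum_perm_anti (s := s)) => i.
by rewrite /christoffel /koszul2 /koszul3 !C_xyx !C_xyy !sK !g_s (C_anti i (s i)); ring.
Qed.

(* The two sums of products of Christoffel symbols in the Ricci tensor,
   split along the Koszul terms. *)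
Definition cross (P Q : 'I_n -> 'I_n -> 'I_n -> R) j l := dsum (fun i b => P i l b * Q j b i).
Definition twist (P : 'I_n -> 'I_n -> 'I_n -> R) j l := dsum (fun i p => C i j p * P p l i).

Lemma christoffel_crossE l j i b : christoffel i l b * christoffel j b i =
  4^-1 * (C i l b * koszul2 j b i + C i l b * koszul3 j b i + koszul2 i l b * C j b i
    + koszul2 i l b * koszul2 j b i + koszul3 i l b * C j b i
    + koszul3 i l b * koszul2 j b i + koszul3 i l b * koszul3 j b i).
Proof.
have CC : C i l b * C j b i = 0 by rewrite C_anti mulNr no_2cycle oppr0.
have K23 : koszul2 i l b * koszul3 j b i = 0.
  transitivity (- (g i / g b) * (g b / g i) * (C l (s b) (s i) * C (s i) j (s b))).
    by rewrite /koszul2 /koszul3; ring.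
  by rewrite (C_anti (s i)) mulrN no_2cycle; ring.
set rhs := RHS; transitivity (4^-1 * (C i l b * C j b i + koszul2 i l b * koszul3 j b i) + rhs).
  by rewrite /rhs /christoffel; field.
by rewrite CC K23 addr0 mulr0 add0r.
Qed.

Lemma christoffel_twistE j l i p : C i j p * christoffel p l i =
  2^-1 * (C i j p * koszul2 p l i + C i j p * koszul3 p l i).
Proof.
have CC : C i j p * C p l i = 0 by rewrite C_anti (C_anti p) mulrNN no_2cycle.
set rhs := RHS; transitivity (2^-1 * (C i j p * C p l i) + rhs).
  by rewrite /rhs /christoffel; field.
by rewrite CC mulr0 add0r.
Qed.

Lemma sum_christoffel_cross j l :
  \sum_i \sum_b christoffel i l b * christoffel j b i =
  4^-1 * (cross C koszul2 j l + cross C koszul3 j l + cross koszul2 C j l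
    + cross koszul2 koszul2 j l + cross koszul3 C j l
    + cross koszul3 koszul2 j l + cross koszul3 koszul3 j l).
Proof. by rewrite -/(dsum _) (eq_dsum (christoffel_crossE l j)) dsumMl !dsumD. Qed.

Lemma sum_christoffel_twist j l :
  \sum_i \sum_p C i j p * christoffel p l i =
  2^-1 * (twist koszul2 j l + twist koszul3 j l).
Proof. by rewrite -/(dsum _) (eq_dsum (christoffel_twistE j l)) dsumMl !dsumD. Qed.

Lemma cross_C_koszul3 j l : cross C koszul3 j l = - cross koszul2 C j l.
Proof.
rewrite /cross -dsumN dsum_swap (dsum_perm s); apply: eq_dsum => i b.
by rewrite /koszul2 /koszul3 !sK !g_s (C_anti (s b) l) (C_anti b j); ring.
Qed.

Lemma cross_koszul3_koszul3 j l : cross koszul3 koszul3 j l = cross koszul3 C j l.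
Proof.
rewrite /cross (dsum_perm s) dsum_swap; apply: eq_dsum => i b.
rewrite /koszul3 !sK (C_anti i (s b)) (C_anti b j) !g_s.
by field; rewrite !g_neq0.
Qed.

Lemma twist_koszul3 j l : twist koszul3 j l = - cross koszul3 C j l.
Proof.
rewrite /twist /cross -dsumN dsum_swap; apply: eq_dsum => i b.
by rewrite (C_anti b j); ring.
Qed.

Lemma cross_koszul2_koszul2 j l : cross koszul2 koszul2 j l = - cross C koszul2 j l.
Proof.
apply/eqP; rewrite -subr_eq0 opprK; apply/eqP.
have -> : cross koszul2 koszul2 j l = dsum (fun i b => g j / g i * C l (s i) b * C i b (s j)).
  rewrite /cross /dsum [LHS](reindex_inj (@perm_inj _ s)) exchange_big.
  apply: eq_bigr => i _; apply: eq_bigr => b _.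
  by rewrite /koszul2 !sK g_s; field; rewrite !g_neq0.
have row_jacobi i : \sum_b (g j / g i * C l (s i) b * C i b (s j) + C i l b * koszul2 j b i)
    = g j / g i * \sum_b C i (s i) b * C l b (s j).
  apply/eqP; rewrite -subr_eq0 mulr_sumr -sumrB; apply/eqP.
  transitivity (- (g j / g i) * \sum_b (C i l b * C b (s i) (s j)
      + C l (s i) b * C b i (s j) + C (s i) i b * C b l (s j))); last first.
    by rewrite C_jacobi mulr0.
  rewrite mulr_sumr; apply: eq_bigr => b _.
  by rewrite /koszul2 (C_anti i b) (C_anti i (s i)) (C_anti l b); ring.
rewrite /cross -dsumD /dsum; under eq_bigr => i _ do rewrite row_jacobi.
apply: (sum_perm_anti (s := s)) => i; rewrite sK g_s -mulrN -sumrN; congr (_ * _).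
by apply: eq_bigr => b _; rewrite (C_anti (s i)) mulNr.
Qed.

Lemma ricci_formE j l :
  ricci_form C G j l = - 4^-1 * cross koszul3 koszul2 j l - 2^-1 * twist koszul2 j l.
Proof.
rewrite ricci_christoffel !sumrB sum_christoffel_cross sum_christoffel_twist.
rewrite exchange_big big1 => [|b _]; last by rewrite -mulr_sumr christoffel_trace mulr0.
rewrite cross_C_koszul3 cross_koszul2_koszul2 cross_koszul3_koszul3 twist_koszul3.
by field.
Qed.

Lemma twist_koszul2_offdiag j l : l != s j -> twist koszul2 j l = 0.
Proof.
move=> lj; rewrite /twist /dsum big1 // => i _; apply: big1 => p _; rewrite /koszul2.
have [->|Cijp] := eqVneq (C i j p) 0; first by rewrite mul0r.
have [->|Clip] := eqVneq (C l (s i) (s p)) 0; first by rewrite !mulr0.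
have Cilp : C i (s l) p != 0 by rewrite C_anti oppr_eq0 C_perm !sK.
by have jl := nice.2 _ _ _ _ Cijp Cilp; rewrite jl sK eqxx in lj.
Qed.

Lemma cross_koszul3_koszul2_offdiag j l : l != s j -> cross koszul3 koszul2 j l = 0.
Proof.
move=> lj; rewrite /cross /dsum big1 // => i _; apply: big1 => b _; rewrite /koszul2 /koszul3.
have [->|Cbil] := eqVneq (C (s b) i (s l)) 0; first by rewrite mulr0 mul0r.
have [->|Cbij] := eqVneq (C b (s i) (s j)) 0; first by rewrite !mulr0.
rewrite C_perm !sK in Cbij.
by have jl := nice.1 _ _ _ _ Cbil Cbij; rewrite -jl sK eqxx in lj.
Qed.

Definition ricci_weight x y z := C x y z * C (s x) (s y) (s z) * g z / (g x * g y).

Definition ricci_diag j :=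
  2^-1 * dsum (fun x y => ricci_weight x y j) - dsum (fun x y => ricci_weight j x y).

Lemma twist_koszul2_diag j : twist koszul2 j (s j) = g j * dsum (ricci_weight j).
Proof.
rewrite /twist -dsumMl; apply: eq_dsum => i p.
rewrite /koszul2 /ricci_weight (C_anti i j).
by field; rewrite !g_neq0.
Qed.

Lemma cross_koszul3_koszul2_diag j :
  cross koszul3 koszul2 j (s j) = - g j * dsum (fun x y => ricci_weight x y j).
Proof.
rewrite /cross -dsumMl /dsum [RHS](reindex_inj (@perm_inj _ s)) [RHS]exchange_big.
apply: eq_bigr => i _; apply: eq_bigr => b _.
rewrite /koszul2 /koszul3 /ricci_weight !sK !g_s.
by field; rewrite !g_neq0.
Qed.

Lemma ricci_form_diag j l :
  ricci_form C G j l = if l == s j then g j / 2 * ricci_diag j else 0.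
Proof.
rewrite ricci_formE; case: eqP => [->|/eqP lj].
  by rewrite twist_koszul2_diag cross_koszul3_koszul2_diag /ricci_diag; field.
by rewrite twist_koszul2_offdiag // cross_koszul3_koszul2_offdiag //; ring.
Qed.

Lemma Ric_op_diag : Ric_op C G = diag_mx (\row_j (ricci_diag j / 2)).
Proof.
apply/matrixP => j q; rewrite /Ric_op invmx_metric !mxE.
under eq_bigr => l _ do rewrite !mxE ricci_form_diag.
rewrite (bigD1 (s j)) //= eqxx big1 ?addr0 => [|l /negbTE ->]; last by rewrite mul0r.
rewrite sK g_s; have [->|jq] := eqVneq j q; last by rewrite mulr0.
by rewrite mulr1n; field; rewrite g_neq0.
Qed.

Lemma Ric_op_scalar k : Ric_op C G = (k / 2)%:M <-> forall j, ricci_diag j = k.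
Proof.
rewrite Ric_op_diag; split => [/matrixP Ric_k j | ric_k].
  by have := Ric_k j j; rewrite !mxE eqxx !mulr1n; lra.
by apply/matrixP => i j; rewrite !mxE ric_k.
Qed.

End RicciOperator.

Section Arrows.
Variables (R : realType) (n : nat) (C : 'I_n -> 'I_n -> 'I_n -> R).
Hypothesis C_anti : forall i j k, C i j k = - C j i k.

Definition root_row (t : triple n) (l : 'I_n) : R :=
  (l == t.2)%:R - (l == t.1.1)%:R - (l == t.1.2)%:R.

Lemma MrootE (a : arrows C) l : (Mroot a l)%:~R = root_row (val a) l.
Proof. by case: a => [[[i j] k] ?]; rewrite /Mroot /root_row /= !intrB. Qed.

Lemma sum_arrows (F : triple n -> R) :
  (forall t, C t.1.1 t.1.2 t.2 = 0 -> F t = 0) ->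
  \sum_(a : arrows C) F (val a) =
  \sum_(i : 'I_n) \sum_(j : 'I_n) \sum_(k : 'I_n) (if (i < j)%N then F (i, j, k) else 0).
Proof.
move=> F0; rewrite -(big_sub (is_arrow C)) big_mkcond !pair_bigA.
apply: eq_bigr => [[[i j] k]] _; rewrite unfold_in /is_arrow /=.
by case: (i < j)%N => //=; case: eqP => //= /(F0 (i, j, k)) ->.
Qed.

Lemma sum_root_row_ker (al : arrows C -> R) (h : 'I_n -> R) :
  (forall l, \sum_a (Mroot a l)%:~R * al a = 0) ->
  \sum_a al a * \sum_l root_row (val a) l * h l = 0.
Proof.
move=> al_ker; under eq_bigr => a _ do rewrite mulr_sumr.
rewrite exchange_big big1 // => l _.
transitivity (h l * \sum_a (Mroot a l)%:~R * al a); last by rewrite al_ker mulr0.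
by rewrite mulr_sumr; apply: eq_bigr => a _; rewrite MrootE; ring.
Qed.

Variables (s : {perm 'I_n}) (g : 'I_n -> R).
Local Notation Y := (ricci_weight C s g).

Lemma ricci_weight_sym x y z : Y x y z = Y y x z.
Proof.
by rewrite /ricci_weight (C_anti x y) (C_anti (s x) (s y)) mulrNN (mulrC (g x)).
Qed.

Lemma ricci_weight_diag x z : Y x x z = 0.
Proof.
have Cxx : C x x z = 0 by have := C_anti x x z; lra.
by rewrite /ricci_weight Cxx !mul0r.
Qed.

Lemma sum_root_row_weight j :
  \sum_(a : arrows C) root_row (val a) j * Y (val a).1.1 (val a).1.2 (val a).2 =
  ricci_diag C s g j.
Proof.
rewrite (@sum_arrows (fun t => root_row t j * Y t.1.1 t.1.2 t.2)); last first.
  by move=> t Ct; rewrite /ricci_weight Ct !mul0r mulr0.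
pose W i p := \sum_k Y i p k.
have W_sym i p : W i p = W p i by apply: eq_bigr => k _; rewrite ricci_weight_sym.
transitivity (2^-1 * dsum (fun i p => Y i p j - ((i == j)%:R + (p == j)%:R) * W i p)).
  rewrite -dsum_lt_sym => [|i p|i]; first last.
  - by rewrite ricci_weight_diag /W big1 ?mulr0 ?subrr // => k _; rewrite ricci_weight_diag.
  - by rewrite [Y i p j]ricci_weight_sym W_sym [(i == j)%:R + _]addrC.
  apply: eq_bigr => i _; apply: eq_bigr => p _; case: ifP => _; last by rewrite big1.
  rewrite /root_row /=; under eq_bigr => k _ do rewrite !mulrBl eq_sym.
  by rewrite !sumrB sum_natr_eq /W mulrDl !mulr_sumr !(eq_sym j); ring.
have row_sum : dsum (fun i p => (i == j)%:R * W i p) = \sum_p W j p.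
  by rewrite /dsum; under eq_bigr => i _ do rewrite -mulr_sumr; rewrite sum_natr_eq.
have col_sum : dsum (fun i p => (p == j)%:R * W i p) = \sum_p W j p.
  by rewrite /dsum; under eq_bigr => i _ do rewrite sum_natr_eq; apply: eq_bigr => i _.
rewrite (@eq_dsum _ _ _ (fun i p => Y i p j + - ((i == j)%:R * W i p)
                                  + - ((p == j)%:R * W i p))) => [|i p]; last by ring.
by rewrite !dsumD !dsumN row_sum col_sum /ricci_diag /dsum /W; field.
Qed.

End Arrows.
Arguments root_row {R n} t l.

Section ArrowPerm.
Variables (R : realType) (n : nat) (C : 'I_n -> 'I_n -> 'I_n -> R) (s : {perm 'I_n}).
Hypothesis C_anti : forall i j k, C i j k = - C j i k.
Hypothesis sK : involutive s.
Hypothesis C_perm : forall i j k, (C i j k != 0) = (C (s i) (s j) (s k) != 0).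

Lemma is_arrow_tri_img t : is_arrow C t -> is_arrow C (tri_img s t).
Proof.
case: t => [[i j] k] /andP [/= ij Cijk]; rewrite /tri_img.
have sij : (s i : nat) != s j.
  by rewrite (inj_eq val_inj) (inj_eq (@perm_inj _ s)); apply: contraTneq ij => ->; rewrite ltnn.
case: ltnP => sji; apply/andP; split => //=; first by rewrite -C_perm.
- by rewrite ltn_neqAle eq_sym sij.
- by rewrite C_anti oppr_eq0 -C_perm.
Qed.

Definition arrow_perm (a : arrows C) : arrows C := insubd a (tri_img s (val a)).

Lemma val_arrow_perm a : val (arrow_perm a) = tri_img s (val a).
Proof. exact/insubdK/is_arrow_tri_img/valP. Qed.

Lemma arrow_permK : involutive arrow_perm.
Proof.
move=> a; apply: val_inj; rewrite !val_arrow_perm.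
case: a => [[[i j] k] Aijk]; have /andP [/= ij _] := Aijk; rewrite /= /tri_img.
by case: ifP => _ /=; rewrite !sK ?ij // ltnNge (ltnW ij).
Qed.

Lemma inv_arrP (X : arrows C -> R) : inv_arr C s X <-> forall a, X (arrow_perm a) = X a.
Proof.
split=> X_inv a; first by apply: X_inv; rewrite val_arrow_perm.
by move=> b ab; have -> : b = arrow_perm a by apply: val_inj; rewrite val_arrow_perm.
Qed.

Lemma sum_arrow_perm (F : arrows C -> R) : \sum_a F a = \sum_a F (arrow_perm a).
Proof. exact: reindex_inj (inv_inj arrow_permK). Qed.

Lemma Mroot_perm a l : (Mroot (arrow_perm a) l)%:~R = (Mroot a (s l))%:~R :> R.
Proof.
rewrite !MrootE val_arrow_perm; case: a => [[[i j] k] ?]; rewrite /root_row /= /tri_img.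
have sE x y : (x == s y) = (s x == y) by rewrite -(inj_eq (@perm_inj _ s)) sK.
by case: ifP => _ /=; rewrite !sE; ring.
Qed.

Lemma ctildeE a : ctilde C s a = - C (s (val a).1.1) (s (val a).1.2) (s (val a).2).
Proof.
by case: a => [[[i j] k] ?]; rewrite /ctilde /sc /=; case: ifP => _ //; rewrite opprK C_anti.
Qed.

Lemma norm_cvec_perm a : `|cvec C (arrow_perm a)| = `|ctilde C s a|.
Proof.
rewrite ctildeE /cvec /sc val_arrow_perm; case: a => [[[i j] k] ?] /=; rewrite /tri_img.
by case: ifP => _ //=; rewrite C_anti !normrN.
Qed.

Lemma norm_ctilde_perm a : `|ctilde C s (arrow_perm a)| = `|cvec C a|.
Proof. by rewrite -norm_cvec_perm arrow_permK. Qed.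

Lemma cvec_neq0 a : cvec C a != 0.
Proof. by case: a => [[[i j] k] Aijk]; have /andP [_ ?] := Aijk; rewrite /cvec /sc oppr_eq0. Qed.

Lemma ctilde_neq0 a : ctilde C s a != 0.
Proof.
by case: a => [[[i j] k] Aijk]; have /andP [_ ?] := Aijk; rewrite ctildeE oppr_eq0 /= -C_perm.
Qed.

Lemma M2_mulE (delta : 'I_n -> bool) a :
  M2_mul C delta a = delta (val a).1.1 (+) delta (val a).1.2 (+) delta (val a).2.
Proof.
case: a => [[[i j] k] Aijk]; rewrite /M2_mul /=.
have split_odd l : odd `|Mroot (exist _ (i, j, k) Aijk) l| && delta l =
    ((l == i) && delta l) (+) ((l == j) && delta l) (+) ((l == k) && delta l).
  by rewrite /Mroot /=; case: (l == i); case: (l == j); case: (l == k); case: (delta l).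
have sum_pick x : \big[addb/false]_(l < n) ((l == x) && delta l) = delta x.
  by rewrite (bigD1 x) //= eqxx big1 ?addbF // => l /negbTE ->.
by under eq_bigr => l _ do rewrite split_odd; rewrite !big_split /= !sum_pick.
Qed.

Lemma orthogonal_kerMT (v : arrows C -> R) :
  (forall a, v (arrow_perm a) = v a) ->
  (forall al, kerMT_inv C s al -> \sum_a al a * v a = 0) ->
  forall w, (forall l, \sum_a (Mroot a l)%:~R * w a = 0) -> \sum_a w a * v a = 0.
Proof.
move=> v_s v_orth w w_ker; pose ws a := w a + w (arrow_perm a).
have ws_ker : kerMT_inv C s ws.
  split=> [l|]; last by apply/inv_arrP => a; rewrite /ws arrow_permK addrC.
  under eq_bigr => a _ do rewrite mulrDr.
  rewrite big_split /= w_ker add0r sum_arrow_perm.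
  by under eq_bigr => a _ do rewrite arrow_permK Mroot_perm; apply: w_ker.
have : \sum_a ws a * v a = 2 * \sum_a w a * v a.
  under eq_bigr => a _ do rewrite mulrDl.
  rewrite big_split /= [X in _ + X]sum_arrow_perm.
  under [X in _ + X]eq_bigr => a _ do rewrite arrow_permK v_s.
  by rewrite mulr2n mulrDl mul1r.
by rewrite v_orth // => /esym /eqP; rewrite mulf_eq0 pnatr_eq0 => /eqP.
Qed.

Lemma exists_inv_potential (v : arrows C -> R) :
  (forall a, v (arrow_perm a) = v a) ->
  (forall al, kerMT_inv C s al -> \sum_a al a * v a = 0) ->
  exists2 y : 'I_n -> R, (forall l, y (s l) = y l) &
    forall a, \sum_l (Mroot a l)%:~R * y l = v a.
Proof.
move=> v_s v_orth.
have [y0 y0_sol] := solvable_of_orthogonal (orthogonal_kerMT v_s v_orth).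
exists (fun l => (y0 l + y0 (s l)) / 2) => [l|a]; first by rewrite sK addrC.
have y0s_sol : \sum_l (Mroot a l)%:~R * y0 (s l) = v a.
  rewrite (reindex_inj (@perm_inj _ s)) /=.
  by under eq_bigr => l _ do rewrite sK -Mroot_perm; rewrite y0_sol v_s.
transitivity ((\sum_l (Mroot a l)%:~R * y0 l + \sum_l (Mroot a l)%:~R * y0 (s l)) / 2).
  by rewrite -big_split mulr_suml; apply: eq_bigr => l _ /=; ring.
by rewrite y0_sol y0s_sol; field.
Qed.

Lemma sum_ln_ctilde (al : arrows C -> R) : (forall a, al (arrow_perm a) = al a) ->
  \sum_a al a * ln `|ctilde C s a| = \sum_a al a * ln `|cvec C a|.
Proof.
move=> al_s; rewrite sum_arrow_perm; apply: eq_bigr => a _.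
by rewrite al_s norm_ctilde_perm.
Qed.

Section ArrowWeight.
Variable g : 'I_n -> R.
Hypothesis g_neq0 : forall i, g i != 0.
Hypothesis g_s : forall i, g (s i) = g i.

Definition arrow_weight (a : arrows C) := ricci_weight C s g (val a).1.1 (val a).1.2 (val a).2.

Lemma arrow_weightE a : arrow_weight a =
  cvec C a * ctilde C s a * (g (val a).2 / (g (val a).1.1 * g (val a).1.2)).
Proof. by rewrite /arrow_weight /ricci_weight ctildeE /cvec /sc; ring. Qed.

Lemma arrow_weight_neq0 a : arrow_weight a != 0.
Proof.
by rewrite arrow_weightE !mulf_neq0 ?cvec_neq0 ?ctilde_neq0 ?invr_eq0 ?mulf_neq0 ?g_neq0.
Qed.

Lemma arrow_weight_perm a : arrow_weight (arrow_perm a) = arrow_weight a.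
Proof.
rewrite /arrow_weight val_arrow_perm //; case: a => [[[i j] k] ?] /=; rewrite /tri_img.
case: ifP => _ /=; rewrite /ricci_weight !sK !g_s; first by ring.
by rewrite (C_anti (s j)) (C_anti j) (mulrC (g j)); ring.
Qed.

Lemma logsign_arrow_weight (delta : 'I_n -> bool) :
  (forall i, logsign (g i) = delta i) -> forall a,
  logsign (arrow_weight a) (+) logsign (cvec C a) (+) logsign (ctilde C s a) =
  M2_mul C delta a.
Proof.
move=> g_delta a; rewrite M2_mulE arrow_weightE /logsign.
rewrite !neq0_mulr_lt0 ?mulf_neq0 ?invr_eq0 ?mulf_neq0 ?cvec_neq0 ?ctilde_neq0 ?g_neq0 //.
rewrite invr_lt0 neq0_mulr_lt0 ?mulf_neq0 ?g_neq0 // -!/(logsign _) !g_delta.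
by case: logsign; case: logsign; case: (delta _); case: (delta _); case: (delta _).
Qed.

Lemma ln_norm_arrow_weight a : ln `|arrow_weight a| =
  ln `|cvec C a| + ln `|ctilde C s a| + \sum_l root_row (val a) l * ln `|g l|.
Proof.
have norm_pos (x : R) : x != 0 -> `|x| \in Num.pos by move=> x0; rewrite posrE normr_gt0.
have gg_pos i j : `|g i| * `|g j| \in Num.pos by rewrite rpredM ?norm_pos ?g_neq0.
rewrite arrow_weightE !normrM normfV normrM.
rewrite !lnM ?lnV ?lnM ?rpredM ?rpredV ?gg_pos ?norm_pos ?cvec_neq0 ?ctilde_neq0 ?g_neq0 //.
rewrite /root_row; under eq_bigr => l _ do rewrite !mulrBl.
by rewrite !sumrB !sum_natr_eq; ring.
Qed.

Lemma sum_Mroot_arrow_weight l :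
  \sum_a (Mroot a l)%:~R * arrow_weight a = ricci_diag C s g l.
Proof.
rewrite -(sum_root_row_weight C_anti); apply: eq_bigr => a _; by rewrite MrootE.
Qed.

Lemma monopow_arrow_weight (al : arrows C -> R) : kerMT_inv C s al ->
  monopow arrow_weight al = monopow (cvec C) (fun a => 2 * al a).
Proof.
move=> [al_ker /inv_arrP al_s].
rewrite (monopow_expR _ arrow_weight_neq0) (monopow_expR _ cvec_neq0); congr expR.
under eq_bigr => a _ do rewrite ln_norm_arrow_weight !mulrDr.
rewrite !big_split /= sum_ln_ctilde // sum_root_row_ker // addr0 -big_split /=.
by apply: eq_bigr => a _; ring.
Qed.

End ArrowWeight.

Lemma realize_arrow_weight (delta : 'I_n -> bool) r (alpha : 'I_r -> arrows C -> R)
    (X : arrows C -> R) :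
  (forall i, delta (s i) = delta i) -> is_basis (kerMT_inv C s) alpha ->
  inv_arr C s X -> (forall a, X a != 0) ->
  (forall a, logsign (X a) (+) logsign (cvec C a) (+) logsign (ctilde C s a)
             = M2_mul C delta a) ->
  (forall i, monopow X (alpha i) = monopow (cvec C) (fun a => 2 * alpha i a)) ->
  exists g, [/\ sigma_diag_metric s g, forall i, logsign (g i) = delta i
              & arrow_weight g = X].
Proof.
move=> delta_s basis /inv_arrP X_s X0 XL XP.
pose v a := ln `|X a| - ln `|cvec C a| - ln `|ctilde C s a|.
have v_s a : v (arrow_perm a) = v a.
  by rewrite /v X_s norm_cvec_perm norm_ctilde_perm; ring.
have v_orth : forall al, kerMT_inv C s al -> \sum_a al a * v a = 0.
  apply: (basis_orthogonal (v := v) basis) => i; have [_ /inv_arrP alpha_s] := basis.1 i.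
  have := XP i; rewrite (monopow_expR _ X0) (monopow_expR _ cvec_neq0) => /expR_inj XPi.
  rewrite /v; under eq_bigr => a _ do rewrite !mulrBr.
  by rewrite !sumrB XPi sum_ln_ctilde // -!sumrB big1 // => a _; ring.
have [y y_s y_sol] := exists_inv_potential v_s v_orth.
pose g := signed_exp delta y.
have g_s l : g (s l) = g l by rewrite /g /signed_exp delta_s y_s.
have g0 := signed_exp_neq0 delta y; have g_delta := logsign_signed_exp delta y.
exists g; split => //; apply/funext => a; apply: logsign_eq.
  apply: ln_inj; rewrite ?posrE ?normr_gt0 ?arrow_weight_neq0 ?X0 //.
  rewrite ln_norm_arrow_weight //; under eq_bigr => l _ do rewrite ln_norm_signed_exp -MrootE.
  by rewrite y_sol /v; ring.
have := logsign_arrow_weight g0 g_delta a; rewrite -(XL a).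
by case: logsign; case: logsign; case: logsign; case: logsign.
Qed.

End ArrowPerm.
Arguments arrow_weight {R n} C s g a.

Theorem theorem2p6 (R : realType) (n : nat) (C : 'I_n -> 'I_n -> 'I_n -> R)
    (s : {perm 'I_n}) (k : R) (delta : 'I_n -> bool)
    (r : nat) (alpha : 'I_r -> arrows C -> R) :
  lie_algebra C -> nilpotent_lie C -> nice_basis C ->
  diagram_involution C s ->
  (forall i, delta (s i) = delta i) ->
  is_basis (kerMT_inv C s) alpha ->
  (exists g : 'I_n -> R,
      sigma_diag_metric s g /\
      (forall i, logsign (g i) = delta i) /\
      Ric_op C (metric_mx s g) = (k / 2)%:M)
  <->
  (exists X : arrows C -> R,
      inv_arr C s X /\
      (forall l : 'I_n, \sum_(a : arrows C) (Mroot a l)%:~R * X a = k) /\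
      (forall a, X a != 0) /\
      (forall a, logsign (X a) (+) logsign (cvec C a) (+) logsign (ctilde C s a)
                 = M2_mul C delta a) /\
      (forall i, monopow X (alpha i) = monopow (cvec C) (fun a => 2 * alpha i a))).
Proof.
move=> [C_anti C_jacobi] nil nice [s2 C_perm] delta_s basis.
have sK := order2_permK s2; have no_2cycle := nilpotent_nice_no_2cycle nice nil.
have Ric_scalar := Ric_op_scalar C_anti C_jacobi no_2cycle nice C_perm sK.
split=> [[g [[g0 g_s] [g_delta Ric_k]]] | [X [X_s [X_k [X0 [X_sign X_pow]]]]]].
  have /(Ric_scalar g g0 g_s) ric_k := Ric_k.
  exists (arrow_weight C s g); split; [|split; [|split; [|split]]].
  - by apply/inv_arrP => // a; exact: arrow_weight_perm.
  - by move=> l; rewrite sum_Mroot_arrow_weight.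
  - exact: arrow_weight_neq0.
  - exact: logsign_arrow_weight.
  - by move=> i; apply: monopow_arrow_weight => //; apply: basis.1.
have [g [[g0 g_s] g_delta gX]] :=
  realize_arrow_weight C_anti sK C_perm delta_s basis X_s X0 X_sign X_pow.
exists g; do 2!split => //; apply/(Ric_scalar g g0 g_s) => j.
by rewrite -sum_Mroot_arrow_weight // gX X_k.
Qed.
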